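(* Consider the eigencurve learning-rate sequence $\{\eta_t\}$ described in the context, and let $\lambda_j$ be an eigenvalue of $H$. For integers $t\ge0$ define $$v_{t+1,j}=\sum_{k=0}^t\eta_k^2\prod_{i=k+1}^t(1-\eta_i\lambda_j)^2 .$$ Then for all integers $1\le t\le t'$ (within the range where the schedule is defined), $$v_{t',j}\le\max\left(v_{t,j},\,\eta_t/\lambda_j\right).$$
   Context: Let $H\in\mathbb{R}^{d\times d}$ be symmetric positive definite, with $\mu=\lambda_{\min}(H)$, $L=\lambda_{\max}(H)$ and $\kappa=L/\mu$. Let $I_{\max}=\log_2\kappa$, treated as an integer. Fix integers $0=t_0<\dots<t_{I_{\max}}=T$ with $\Delta_i=t_i-t_{i-1}$. The eigencurve learning rate is $$\eta_t=\frac{1}{L+\mu\sum_{j=1}^{i-1}\Delta_j2^{j-1}+2^{i-1}\mu(t-t_{i-1})}\quad\text{for }t\in[t_{i-1},t_i).$$ In particular $\eta_t\le1/L$ and $\eta_t$ is nonincreasing in $t$. *)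

From HB Require Import structures.
From mathcomp Require Import all_boot all_order all_algebra.
Set Implicit Arguments. Unset Strict Implicit. Unset Printing Implicit Defensive.
Import Order.TTheory GRing.Theory Num.Theory.
Local Open Scope ring_scope.

Definition eigencurve_phase (R : realFieldType) (mu L : R) (tb : nat -> nat)
  (i t : nat) : R :=
  1 / (L + mu * (\sum_(1 <= j < i) ((tb j - tb j.-1)%N%:R * 2 ^+ j.-1))
         + 2 ^+ i.-1 * mu * (t - tb i.-1)%N%:R).

(* v_n = sum_{k=0}^{n-1} eta_k^2 prod_{i=k+1}^{n-1} (1 - eta_i lam)^2,
   i.e. v_{t+1} = sum_{k=0}^{t} eta_k^2 prod_{i=k+1}^{t} (1 - eta_i lam)^2. *)
Definition vseq (R : realFieldType) (eta : nat -> R) (lam : R) (n : nat) : R :=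
  \sum_(k < n) eta k ^+ 2 * \prod_(k.+1 <= i < n) (1 - eta i * lam) ^+ 2.

(* Writing v_n for vseq, one step of the recursion is
   v_{n+1} = (1 - eta_n lam)^2 v_n + eta_n^2, and the map
   v |-> (1 - e lam)^2 v + e^2 sends [0, max(v, e/lam)] into itself whenever
   0 <= e lam <= 1.  Since the eigencurve rates are positive, at most
   1/L <= 1/lam, and nonincreasing (the schedule is continuous at the
   breakpoints), the bound max(v_t, eta_t/lam) is preserved from step t on. *)
From HB Require Import structures.
From mathcomp Require Import all_boot all_order all_algebra.
From mathcomp Require Import ring lra.
Set Implicit Arguments. Unset Strict Implicit. Unset Printing Implicit Defensive.
Import Order.TTheory GRing.Theory Num.Theory.
Local Open Scope ring_scope.

Lemma sqr_contraction_le_max (R : realFieldType) (e l v : R) :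
  0 <= e -> 0 < l -> e * l <= 1 ->
  (1 - e * l) ^+ 2 * v + e ^+ 2 <= Num.max v (e / l).
Proof.
move=> e_ge0 l_gt0 el_le1; set m := Num.max v (e / l).
have e_le_lm : e <= l * m by rewrite -ler_pdivrMl // mulrC le_max lexx orbT.
have scale_le : (1 - e * l) ^+ 2 * v <= (1 - e * l) ^+ 2 * m.
  by apply: ler_wpM2l; rewrite ?sqr_ge0 // le_max lexx.
(* (1 - el)^2 m + e^2 <= m  iff  e^2 <= e (2 - el) (l m) *)
have sqr_le : e * e <= e * (2 - e * l) * (l * m).
  have : e * e <= e * (l * m) by apply: ler_wpM2l.
  have : 0 <= e * (1 - e * l) * (l * m).
    by apply: mulr_ge0; [apply: mulr_ge0 => //; lra | nra].
  nra.
rewrite !expr2 in scale_le *; nra.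
Qed.

Lemma vseqS (R : realFieldType) (eta : nat -> R) (lam : R) n :
  vseq eta lam n.+1 = (1 - eta n * lam) ^+ 2 * vseq eta lam n + eta n ^+ 2.
Proof.
rewrite /vseq big_ord_recr /= big_geq ?leqnn // mulr1; congr (_ + _).
rewrite mulr_sumr; apply: eq_bigr => k _.
by rewrite big_nat_recr /= ?ltn_ord // mulrA mulrC.
Qed.

Lemma vseq_le_max (R : realFieldType) (eta : nat -> R) (lam : R) t t' :
  0 < lam -> (t <= t')%N ->
  (forall n, (t <= n < t')%N ->
     [/\ 0 <= eta n, eta n * lam <= 1 & eta n <= eta t]) ->
  vseq eta lam t' <= Num.max (vseq eta lam t) (eta t / lam).
Proof.
move=> lam_gt0 /subnK <-.
elim: (t' - t)%N => [|k IHk] eta_ok; first by rewrite add0n le_max lexx.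
have [e_ge0 el_le1 e_le] : [/\ 0 <= eta (k + t)%N, eta (k + t)%N * lam <= 1
                            & eta (k + t)%N <= eta t].
  by apply: eta_ok; rewrite leq_addl addSn ltnSn.
rewrite addSn vseqS.
apply: le_trans (sqr_contraction_le_max _ e_ge0 lam_gt0 el_le1) _.
rewrite ge_max; apply/andP; split.
  by apply: IHk => n /andP[tn nk]; apply: eta_ok; rewrite tn addSn ltnS ltnW.
by rewrite le_max ler_pM2r ?invr_gt0 // e_le orbT.
Qed.

Lemma posdef_eigenvalue_gt0 (R : realFieldType) (d : nat) (H : 'M[R]_d) a :
  (forall x : 'rV[R]_d, x != 0 -> 0 < (x *m H *m x^T) 0 0) ->
  eigenvalue H a -> 0 < a.
Proof.
move=> H_posdef /eigenvalueP [v vH v_neq0].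
have := H_posdef v v_neq0; rewrite vH -scalemxAl mxE.
have vv_ge0 : 0 <= (v *m v^T) 0 0.
  by rewrite mxE; apply: sumr_ge0 => j _; rewrite mxE -expr2 sqr_ge0.
by apply: contraTT; rewrite -!leNgt => /mulr_le0_ge0; apply.
Qed.

Lemma exists_phase_index (tb : nat -> nat) n s :
  tb 0 = 0%N -> (s < tb n)%N ->
  exists2 i, (1 <= i <= n)%N & (tb i.-1 <= s < tb i)%N.
Proof.
move=> tb0; elim: n => [|n IHn] s_lt; first by rewrite tb0 in s_lt.
case: (ltnP s (tb n)) => [/IHn [i /andP[i_gt0 i_le] s_in] | tbn_le].
  by exists i; rewrite ?i_gt0 ?(leq_trans i_le) ?leqnSn.
by exists n.+1; rewrite //= tbn_le.
Qed.

Definition eigencurve_den (R : realFieldType) (mu L : R) (tb : nat -> nat)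
  (i t : nat) : R :=
  L + mu * (\sum_(1 <= j < i) ((tb j - tb j.-1)%N%:R * 2 ^+ j.-1))
    + 2 ^+ i.-1 * mu * (t - tb i.-1)%N%:R.

Section EigencurvePhase.

Variables (R : realFieldType) (mu L : R) (tb : nat -> nat).
Hypotheses (mu_ge0 : 0 <= mu) (L_gt0 : 0 < L).

Local Notation den := (eigencurve_den mu L tb).
Local Notation phase := (eigencurve_phase mu L tb).

Lemma eigencurve_phaseE i s : phase i s = (den i s)^-1.
Proof. by rewrite /eigencurve_phase div1r. Qed.

Lemma eigencurve_den_ge i s : L <= den i s.
Proof.
rewrite /eigencurve_den -addrA lerDl addr_ge0 ?mulr_ge0 ?exprn_ge0 //.
by apply: sumr_ge0 => j _; rewrite mulr_ge0 ?exprn_ge0.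
Qed.

Lemma eigencurve_den_gt0 i s : 0 < den i s.
Proof. exact: lt_le_trans (eigencurve_den_ge i s). Qed.

Lemma eigencurve_den_homo i s s' : (s <= s')%N -> den i s <= den i s'.
Proof.
move=> s_le; rewrite /eigencurve_den lerD2l ler_wpM2l ?mulr_ge0 ?exprn_ge0 //.
by rewrite ler_nat leq_sub2r.
Qed.

Lemma eigencurve_den_next i : (1 <= i)%N -> den i.+1 (tb i) = den i (tb i).
Proof.
move=> i_gt0; rewrite /eigencurve_den big_nat_recr //= subnn mulr0 addr0.
by rewrite mulrDr addrA; congr (_ + _); ring.
Qed.

Lemma eigencurve_phase_ge0 i s : 0 <= phase i s.
Proof. by rewrite eigencurve_phaseE invr_ge0 ltW ?eigencurve_den_gt0. Qed.

Lemma eigencurve_phase_le_invL i s : phase i s <= L^-1.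
Proof.
rewrite eigencurve_phaseE lef_pV2 ?posrE ?eigencurve_den_gt0 //.
exact: eigencurve_den_ge.
Qed.

Lemma eigencurve_phase_homo i s s' : (s <= s')%N -> phase i s' <= phase i s.
Proof.
move=> s_le; rewrite !eigencurve_phaseE lef_pV2 ?posrE ?eigencurve_den_gt0 //.
exact: eigencurve_den_homo.
Qed.

Lemma eigencurve_phase_next i s :
  (1 <= i)%N -> (s <= tb i)%N -> phase i.+1 (tb i) <= phase i s.
Proof.
move=> i_gt0 s_le.
rewrite [X in X <= _]eigencurve_phaseE eigencurve_den_next //.
by rewrite -eigencurve_phaseE eigencurve_phase_homo.
Qed.

End EigencurvePhase.

Section EigencurveSchedule.

Variables (R : realFieldType) (mu L : R) (Imax : nat) (tb : nat -> nat).
Variable eta : nat -> R.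
Hypotheses (mu_ge0 : 0 <= mu) (L_gt0 : 0 < L).
Hypothesis tb0 : tb 0 = 0%N.
Hypothesis tb_incr : forall i, (i < Imax)%N -> (tb i < tb i.+1)%N.
Hypothesis etaE : forall i s, (1 <= i <= Imax)%N -> (tb i.-1 <= s < tb i)%N ->
  eta s = eigencurve_phase mu L tb i s.

Lemma eigencurve_bounds s : (s < tb Imax)%N -> 0 <= eta s <= L^-1.
Proof.
move=> /(exists_phase_index tb0) [i i_in s_in].
by rewrite (etaE i_in s_in) eigencurve_phase_ge0 ?eigencurve_phase_le_invL.
Qed.

Lemma eigencurve_nonincreasingS s : (s.+1 < tb Imax)%N -> eta s.+1 <= eta s.
Proof.
move=> sS_lt; have /(exists_phase_index tb0) [i i_in s_in] := ltnW sS_lt.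
have /andP[i_gt0 i_le] := i_in; have /andP[tb_le s_lt] := s_in.
rewrite (etaE i_in s_in); case: (ltnP s.+1 (tb i)) => [sS_lt_tb | tb_le_sS].
  by rewrite (etaE i_in) ?sS_lt_tb ?(leq_trans tb_le) // eigencurve_phase_homo.
have sS_eq : s.+1 = tb i by apply/eqP; rewrite eqn_leq s_lt tb_le_sS.
have i_lt : (i < Imax)%N.
  rewrite ltn_neqAle i_le andbT.
  by apply: contraTneq sS_lt => <-; rewrite sS_eq ltnn.
rewrite sS_eq (etaE (i := i.+1)) /= ?i_lt ?leqnn ?tb_incr //.
by rewrite eigencurve_phase_next // ltnW.
Qed.

Lemma eigencurve_nonincreasing s s' :
  (s <= s')%N -> (s' < tb Imax)%N -> eta s' <= eta s.
Proof.
move=> s_le s'_lt.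
apply: (homo_leq_in (D := gtn (tb Imax)) (r := fun x y => y <= x)) => //.
- by move=> y x z yx zy; exact: le_trans zy yx.
- by move=> x y _ y_lt k /andP[_ k_lt]; exact: ltn_trans k_lt y_lt.
- by move=> x _; exact: eigencurve_nonincreasingS.
- exact: leq_ltn_trans s_le s'_lt.
Qed.

End EigencurveSchedule.

Theorem lemma10 (R : realFieldType) (d : nat) (H : 'M[R]_d)
  (mu L : R) (Imax : nat) (tb : nat -> nat) (T : nat) (eta : nat -> R)
  (lam : R) (t t' : nat) :
  H^T = H ->
  (forall x : 'rV[R]_d, x != 0 -> 0 < (x *m H *m x^T) 0 0) ->
  eigenvalue H mu -> eigenvalue H L ->
  (forall a, eigenvalue H a -> mu <= a <= L) ->
  L / mu = 2 ^+ Imax ->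
  tb 0 = 0%N ->
  (forall i, (i < Imax)%N -> (tb i < tb i.+1)%N) ->
  tb Imax = T ->
  (forall i s, (1 <= i <= Imax)%N -> (tb i.-1 <= s < tb i)%N ->
     eta s = eigencurve_phase mu L tb i s) ->
  eigenvalue H lam ->
  (1 <= t)%N -> (t <= t')%N -> (t' <= T)%N ->
  vseq eta lam t' <= Num.max (vseq eta lam t) (eta t / lam).
Proof.
move=> _ H_posdef mu_eig L_eig eig_bounds _ tb0 tb_incr <- etaE lam_eig _.
move=> t_le t'_le.
have mu_ge0 := ltW (posdef_eigenvalue_gt0 H_posdef mu_eig).
have L_gt0 := posdef_eigenvalue_gt0 H_posdef L_eig.
have lam_gt0 := posdef_eigenvalue_gt0 H_posdef lam_eig.
have /andP[_ lam_le_L] := eig_bounds _ lam_eig.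
apply: vseq_le_max => // n /andP[t_le_n n_lt].
have n_lt_T : (n < tb Imax)%N := leq_trans n_lt t'_le.
have /andP[eta_ge0 eta_le] := eigencurve_bounds mu_ge0 L_gt0 tb0 etaE n_lt_T.
split=> //.
- by rewrite -ler_pdivlMr // div1r (le_trans eta_le) // lef_pV2 ?posrE.
- exact: (eigencurve_nonincreasing mu_ge0 L_gt0 tb0 tb_incr etaE t_le_n n_lt_T).
Qed.
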